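(* Let $(X,T)$ be a dynamical system. The following are equivalent: (1) $(X,T)$ is weakly mixing; (2) there exists a dense $G_\delta$ subset $X'$ of $X$ such that for each $x\in X'$ and all opene $G,U,V\subset X$, the set $n_T(x,G)\cap N_T(U,V)$ is an IP set.
   Context: A dynamical system $(X,T)$: $X$ is a compact metric space with more than one point and without isolated points, $T:X\to X$ a continuous surjection. ''Opene'' means open and nonempty. $N_T(U,V)=\{n\in\mathbb{Z}_+:U\cap T^{-n}V\neq\varnothing\}$, $n_T(x,G)=\{n\in\mathbb{Z}_+:T^nx\in G\}$. $(X,T)$ is weakly mixing if $(X\times X,T\times T)$ is transitive (i.e. $N_{T\times T}(A,B)\neq\varnothing$ for all opene $A,B\subset X\times X$). A set $\mathcal{S}\subset\mathbb{N}$ is an IP set if there is a sequence $(p_i)_{i\ge1}$ in $\mathbb{N}$ with $\{p_{i_1}+\dots+p_{i_k}:k\in\mathbb{N},\ 1\le i_1<\dots<i_k\}\subset\mathcal{S}$. *)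

From HB Require Import structures.
From mathcomp Require Import all_boot all_order all_algebra.
From mathcomp Require Import all_classical all_reals all_analysis.
Set Implicit Arguments. Unset Strict Implicit. Unset Printing Implicit Defensive.
Import Order.TTheory GRing.Theory Num.Theory.
Local Open Scope classical_set_scope.

Definition opene {T : topologicalType} (A : set T) : Prop := open A /\ A !=set0.

(* N_T(U,V) = { n in Z_+ : U meets T^{-n} V }  (Z_+ includes 0) *)
Definition N_T {T : Type} (f : T -> T) (U V : set T) : set nat :=
  [set n | U `&` (iter n f) @^-1` V !=set0].

Definition n_T {T : Type} (f : T -> T) (x : T) (G : set T) : set nat :=
  [set n | G (iter n f x)].

Definition transitive_sys {T : topologicalType} (f : T -> T) : Prop :=
  forall U V : set T, opene U -> opene V -> N_T f U V !=set0.

Definition prod_map {T : Type} (f : T -> T) : T * T -> T * T :=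
  fun p => (f p.1, f p.2).

Definition weakly_mixing {T : topologicalType} (f : T -> T) : Prop :=
  @transitive_sys (T * T)%type (prod_map f).

Definition IP_set (S : set nat) : Prop :=
  exists p : nat -> nat, (forall i, (0 < p i)%N) /\
    forall s : seq nat, s != [::] -> sorted ltn s -> S (\sum_(i <- s) p i)%N.

Definition G_delta {T : topologicalType} (A : set T) : Prop :=
  exists U : nat -> set T, (forall i, open (U i)) /\ A = \bigcap_i U i.

Definition dynamical_system {R : realType} (X : metricType R) (f : X -> X) : Prop :=
  [/\ compact [set: X],
      exists x y : X, x <> y,
      (forall x : X, ~ open [set x]),
      continuous f &
      (forall y : X, exists x : X, f x = y)].

From HB Require Import structures.
From mathcomp Require Import all_boot all_order all_algebra.
From mathcomp Require Import all_classical all_reals all_analysis.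
Set Implicit Arguments. Unset Strict Implicit. Unset Printing Implicit Defensive.
Import Order.TTheory GRing.Theory Num.Theory.
Local Open Scope classical_set_scope.

(** Weak mixing lets one pass from two return-time sets [N_T(U1,V1)] and
  [N_T(U2,V2)] to a single [N_T(A,B)] contained in both, for some opene [A, B].
  Hence, for a countable base [(b_n)], the points visiting [b_i] at some time of
  [N_T(b_j,b_k)] form a dense open set, and by Baire's theorem the points doing
  so for all [i, j, k] form a dense G_delta [X'].  For [x] in [X'] the IP set is
  built inductively: together with the generators chosen so far one keeps opene
  [W, C, D] with [T^s W ⊆ G] and [s + N_T(C,D) ⊆ N_T(U,V)] for every finite sum
  [s] of generators.  The next generator is a time [p > 0] with [T^p x ∈ W] and
  [p ∈ N_T(C,D) ∩ N_T(W,W)]; then [W] shrinks to [W ∩ T^-p W] and [C, D] are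
  replaced by a pair whose return times lie in [N_T(C,D) ∩ (N_T(C,D) - p)].
  Conversely, a point of [X'] in [U1] entering [V1] at a time of [N_T(U2,V2)]
  shows that [T × T] carries [U1 × U2] into [V1 × V2]. *)

Lemma dependent_choice {A : Type} (P : A -> Prop) (Q : nat -> A -> A -> Prop) (a0 : A) :
  P a0 -> (forall n a, P a -> exists2 b, P b & Q n a b) ->
  exists u : nat -> A, u 0 = a0 /\ forall n, P (u n) /\ Q n (u n) (u n.+1).
Proof.
move=> Pa0 step.
have [g Hg] : {g : nat * A -> A &
    forall na, P na.2 -> P (g na) /\ Q na.1 na.2 (g na)}.
  apply: (@choice _ _ (fun na b => P na.2 -> P b /\ Q na.1 na.2 b)) => -[n a].
  have [/(step n)[b Pb Qab]|nPa] := pselect (P a); first by exists b.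
  by exists a => /nPa.
pose fix u n := if n is m.+1 then g (m, u m) else a0.
have Pu n : P (u n) by elim: n => //= n /(Hg (n, _))[].
by exists u; split => // n; split => //; exact: (Hg (n, u n) (Pu n)).2.
Qed.

Fixpoint subset_sums (p : nat -> nat) (k : nat) : set nat :=
  if k is k.+1 then subset_sums p k `|` [set s + p k | s in subset_sums p k]
  else [set 0].

Lemma subset_sums_mono (p : nat -> nat) (k l : nat) :
  (k <= l)%N -> subset_sums p k `<=` subset_sums p l.
Proof.
move=> /subnK <-; elim: (l - k)%N => // n IH.
by apply: subset_trans IH _; exact: subsetUl.
Qed.

Lemma subset_sums_sorted (p : nat -> nat) (k : nat) (t : seq nat) :
  sorted ltn t -> all (fun i => i < k)%N t -> subset_sums p k (\sum_(i <- t) p i).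
Proof.
elim/last_ind: t k => [|t m IH] k.
  by rewrite big_nil => _ _; exact: (subset_sums_mono (p := p) (leq0n k) (erefl 0%N)).
rewrite !(sorted_pairwise ltn_trans) -cats1 pairwise_cat allrel1r all_cat /=.
move=> /and3P[t_lt_m srt _] /and3P[_ mk _].
rewrite big_cat big_seq1 /=; apply: (subset_sums_mono (p := p) mk); right.
by exists (\sum_(i <- t) p i) => //; apply: IH; rewrite ?(sorted_pairwise ltn_trans).
Qed.

Lemma IP_set_subset_sums (S : set nat) (p : nat -> nat) :
  (forall i, 0 < p i)%N -> (forall k s, subset_sums p k s -> S (s + p k)%N) ->
  IP_set S.
Proof.
move=> p_gt0 Sp; exists p; split => // t; case/lastP: t => // t m _.
rewrite (sorted_pairwise ltn_trans) -cats1 pairwise_cat allrel1r /=.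
move=> /and3P[t_lt_m srt _]; rewrite big_cat big_seq1 /=; apply: Sp.
by apply: subset_sums_sorted; rewrite ?(sorted_pairwise ltn_trans).
Qed.

Lemma IP_set_neq0 (S : set nat) : IP_set S -> S !=set0.
Proof.
by move=> [p [_ Sp]]; exists (p 0%N); have := Sp [:: 0%N] isT isT; rewrite big_seq1.
Qed.

Lemma iter_prod_map {X : Type} (T : X -> X) (n : nat) (a b : X) :
  iter n (prod_map T) (a, b) = (iter n T a, iter n T b).
Proof. by elim: n => //= n ->. Qed.

Lemma N_T_preimage {X : Type} (T : X -> X) (U V : set X) (p n : nat) :
  N_T T U (iter p T @^-1` V) n <-> N_T T U V (p + n).
Proof. by split=> -[y [Uy Vy]]; exists y; split; rewrite //= iterD in Vy *. Qed.

Lemma N_T_subset {X : Type} (T : X -> X) (U U' V V' : set X) :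
  U `<=` U' -> V `<=` V' -> N_T T U V `<=` N_T T U' V'.
Proof. by move=> UU' VV' n [y [Uy Vy]]; exists y; split; [exact: UU'|exact: VV']. Qed.

Section ProductOpene.
Variable X : topologicalType.

Lemma opene_setX (A B : set X) : opene A -> opene B -> opene (A `*` B).
Proof.
move=> [oA [a Aa]] [oB [b Bb]]; split; last by exists (a, b).
rewrite openE => q [Aq Bq]; exists (A, B) => //; split => /=;
  exact: open_nbhs_nbhs.
Qed.

Lemma opene_sub_setX (O : set (X * X)) :
  opene O -> exists A B, [/\ opene A, opene B & A `*` B `<=` O].
Proof.
move=> [+ [q Oq]]; rewrite openE => /(_ q Oq)[[P Q] /= [Pq Qq] PQO].
exists P°, Q°; split.
- by split; [exact: open_interior|exists q.1].
- by split; [exact: open_interior|exists q.2].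
- by move=> [a b] [/= /interior_subset Pa /interior_subset Qb]; exact: PQO.
Qed.

End ProductOpene.

Definition meets_return_times {X : topologicalType} (T : X -> X) (x : X) : Prop :=
  forall W E F : set X, opene W -> opene E -> opene F ->
    n_T T x W `&` N_T T E F !=set0.

Section WeakMixing.
Variables (X : topologicalType) (T : X -> X).

Lemma weakly_mixing_transitive : weakly_mixing T -> transitive_sys T.
Proof.
move=> wmT U V oU oV.
have [n [[y z] [[/= Uy _]]]] := wmT _ _ (opene_setX oU oU) (opene_setX oV oV).
by rewrite /= iter_prod_map => -[/= Vy _]; exists n, y.
Qed.

Lemma dense_meets_return_times_weakly_mixing (X' : set X) :
  dense X' -> (forall x, X' x -> meets_return_times T x) -> weakly_mixing T.
Proof.
move=> dX' X'meets O1 O2 /opene_sub_setX[U1 [U2 [[oU1 U1n] oU2 UO1]]].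
move=> /opene_sub_setX[V1 [V2 [oV1 oV2 VO2]]].
have [x [U1x X'x]] := dX' U1 U1n oU1.
have [n [V1n [y [U2y V2n]]]] := X'meets x X'x V1 U2 V2 oV1 oU2 oV2.
by exists n, (x, y); split; [exact: UO1|rewrite /= iter_prod_map; exact: VO2].
Qed.

Hypothesis contT : continuous T.

Lemma open_preimage_iter (n : nat) (A : set X) : open A -> open (iter n T @^-1` A).
Proof.
elim: n A => [|n IH] A oA //=.
by apply: (IH (T @^-1` A)); exact: (proj1 (continuousP T) contT).
Qed.

Lemma weakly_mixing_N_TI (U1 V1 U2 V2 : set X) : weakly_mixing T ->
  opene U1 -> opene V1 -> opene U2 -> opene V2 ->
  exists A B, [/\ opene A, opene B & N_T T A B `<=` N_T T U1 V1 `&` N_T T U2 V2].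
Proof.
move=> wmT oU1 oV1 oU2 oV2.
have [k [[y z] [[/= U1y V1z]]]] := wmT _ _ (opene_setX oU1 oV1) (opene_setX oU2 oV2).
rewrite /= iter_prod_map => -[/= U2y V2z].
exists (U1 `&` iter k T @^-1` U2), (V1 `&` iter k T @^-1` V2); split.
- split; last by exists y.
  by apply: openI; [case: oU1|apply: open_preimage_iter; case: oU2].
- split; last by exists z.
  by apply: openI; [case: oV1|apply: open_preimage_iter; case: oV2].
- move=> n [w [[U1w U2w] [/= V1w V2w]]]; split; first by exists w.
  by exists (iter k T w); split => //=; rewrite -iterD addnC iterD.
Qed.

Hypothesis surjT : forall y, exists x, T x = y.

Lemma opene_preimage_iter (n : nat) (A : set X) : opene A -> opene (iter n T @^-1` A).
Proof.
move=> [oA nA]; split; first exact: open_preimage_iter.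
elim: n A nA {oA} => [|n IH] A [a Aa] //=; first by exists a.
by have [b Tb] := surjT a; apply: (IH (T @^-1` A)); exists b; rewrite /= Tb.
Qed.

Lemma meets_return_times_pos (x : X) (W E F : set X) : meets_return_times T x ->
  opene W -> opene E -> opene F ->
  exists2 p, (0 < p)%N & (n_T T x W `&` N_T T E F) p.
Proof.
move=> xmeets oW oE oF.
have [p [Wp EFp]] := xmeets _ _ _ (opene_preimage_iter 1 oW) oE (opene_preimage_iter 1 oF).
(* the shift is absorbed by [iter p.+1 T y = T (iter p T y)], a conversion *)
by exists p.+1.
Qed.

End WeakMixing.

Section IPConstruction.
Variables (X : topologicalType) (T : X -> X).
Hypotheses (contT : continuous T) (surjT : forall y, exists x, T x = y)
  (wmT : weakly_mixing T).
Variables (x : X) (G U V : set X).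
Hypothesis xmeets : meets_return_times T x.

Record ip_state := IPState {
  ip_sums : set nat; ip_win : set X; ip_from : set X; ip_to : set X }.

Definition ip_invariant (st : ip_state) : Prop :=
  [/\ opene (ip_win st), opene (ip_from st), opene (ip_to st),
    forall s, ip_sums st s -> ip_win st `<=` iter s T @^-1` G &
    forall s, ip_sums st s ->
      N_T T (ip_from st) (ip_to st) `<=` [set n | N_T T U V (s + n)]].

Definition ip_step (st st' : ip_state) : Prop := exists p, [/\ (0 < p)%N,
  ip_win st (iter p T x), N_T T (ip_from st) (ip_to st) p &
  ip_sums st' = ip_sums st `|` [set s + p | s in ip_sums st]].

Lemma ip_invariant_step (st : ip_state) :
  ip_invariant st -> exists2 st', ip_invariant st' & ip_step st st'.
Proof.
case: st => S W C D [/= oW oC oD SG SN].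
have [E [F [oE oF EF]]] := weakly_mixing_N_TI contT wmT oC oD oW oW.
have [p p_gt0 [Wp /EF[CDp [y [Wy Wpy]]]]] :=
  meets_return_times_pos contT surjT xmeets oW oE oF.
have oDp := opene_preimage_iter contT surjT p oD.
have [C' [D' [oC' oD' C'D']]] := weakly_mixing_N_TI contT wmT oC oD oC oDp.
exists (IPState (S `|` [set s + p | s in S]) (W `&` iter p T @^-1` W) C' D'); last by exists p.
split => //=.
- split; last by exists y.
  by apply: openI; [case: oW|apply: open_preimage_iter => //; case: oW].
- move=> s [Ss|[{}s Ss <-]] z [Wz Wpz]; first exact: (SG s Ss z Wz).
  by rewrite /= iterD; exact: (SG s Ss _ Wpz).
- move=> s [Ss|[{}s Ss <-]] n /C'D'[CDn /N_T_preimage CDpn].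
    exact: (SN s Ss n CDn).
  by rewrite /= -addnA; exact: (SN s Ss _ CDpn).
Qed.

Lemma meets_return_times_IP_set :
  opene G -> opene U -> opene V -> IP_set (n_T T x G `&` N_T T U V).
Proof.
move=> oG oU oV.
have inv0 : ip_invariant (IPState [set 0%N] G U V).
  by split => //= s -> y.
have [u [u0 u_step]] := dependent_choice (Q := fun=> ip_step) inv0
  (fun _ => ip_invariant_step).
have [p p_spec] := choice (fun k => (u_step k).2).
have sums_u k : subset_sums p k `<=` ip_sums (u k).
  elim: k => [|k IH]; first by rewrite u0.
  have [_ _ _ ->] := p_spec k.
  by move=> s [/IH Ss|[{}s /IH Ss <-]]; [left|right; exists s].
apply: (IP_set_subset_sums (p := p)) => [k|k s /sums_u Ss]; first by case: (p_spec k).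
have [_ _ _ SG SN] := (u_step k).1; have [_ Wp CDp _] := p_spec k.
by split; [rewrite /n_T /= iterD; exact: (SG s Ss _ Wp)|exact: (SN s Ss _ CDp)].
Qed.

End IPConstruction.

Section CompactBaire.
Variable T : topologicalType.
Hypothesis cptT : compact [set: T].

Lemma compact_nested_closure (V : nat -> set T) :
  (forall n, V n !=set0) -> (forall n, V n.+1 `<=` V n) ->
  exists p, forall n, closure (V n) p.
Proof.
move=> Vn0 Vdecr.
have Vmono m n : (m <= n)%N -> V n `<=` V m.
  move=> /subnK <-; elim: (n - m)%N => // k IH.
  exact: subset_trans (Vdecr _) IH.
have FV : ProperFilter (filter_from [set: nat] V).
  apply: filter_from_proper => [|n _]; last exact: Vn0.
  apply: filter_from_filter => [|m n _ _]; first by exists 0%N.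
  by exists (maxn m n) => // y Vy; split; apply: Vmono Vy; rewrite ?leq_maxl ?leq_maxr.
have [p [_ clp]] := cptT FV (ex_intro2 _ _ 0%N I (fun _ _ => I)).
by exists p => n B Bp; apply: clp Bp; exists n.
Qed.

Hypothesis regT : regular_space T.

Lemma dense_open_shrink (U W : set T) : open U -> dense U -> opene W ->
  exists2 V, opene V & closure V `<=` W `&` U.
Proof.
move=> oU dU [oW W0].
have [x [Wx Ux]] := dU W W0 oW.
have /regT[B Bx clB] : nbhs x (W `&` U) by apply: open_nbhs_nbhs; split => //; exact: openI.
exists B°; first by split; [exact: open_interior|exists x].
by apply: subset_trans clB; apply: closureS; exact: interior_subset.
Qed.

Lemma Baire_compact (U : nat -> set T) :
  (forall n, open (U n)) -> (forall n, dense (U n)) -> dense (\bigcap_n U n).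
Proof.
move=> oU dU O O0 oO.
have [V [V0 V_spec]] := dependent_choice
  (Q := fun n W W' => closure W' `<=` W `&` U n) (conj oO O0)
  (fun n _ => dense_open_shrink (oU n) (dU n)).
have clVU n : closure (V n.+1) `<=` V n `&` U n := (V_spec n).2.
have [p clp] : exists p, forall n, closure (V n) p.
  apply: compact_nested_closure => [n|n y Vy]; first by case: (V_spec n) => -[].
  by have [] := clVU n y (subset_closure Vy).
exists p; split; first by rewrite -V0; have [] := clVU 0%N p (clp 1%N).
by move=> n _; have [] := clVU n p (clp n.+1).
Qed.

End CompactBaire.

Section CompactMetricBasis.
Context {R : realType} {X : metricType R} (x0 : X).

(* [compact_second_countable] is stated for pointed spaces; any point will do. *)
Definition pointed_at : Type := X.
HB.instance Definition _ := PseudoMetric.on pointed_at.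
HB.instance Definition _ := isPointed.Build pointed_at x0.

Lemma compact_opene_basis : compact [set: X] ->
  exists b : nat -> set X,
    (forall n, opene (b n)) /\ forall W, opene W -> exists n, b n `<=` W.
Proof.
move=> cptX.
have [B cB [oB Bbasis]] := compact_second_countable (T := pointed_at) cptX.
pose B' := B `&` [set A | A !=set0].
have B'W W : opene W -> exists2 A, B' A & A `<=` W.
  move=> [oW [w Ww]].
  have [A [BA Aw] AW] := Bbasis w W (open_nbhs_nbhs (conj oW Ww)).
  by exists A => //; split => //; exists w.
have cB' : countable B' := sub_countable (subset_card_le (@subIsetl _ _ _)) cB.
have /pfcard_geP[B'0|/surjfunPex[b B'b]] := cB'.
  by have [A] := B'W _ (conj openT (ex_intro _ x0 I)); rewrite B'0.
exists b; split => [n|W /B'W[A]]; last by rewrite B'b => -[n _ <-]; exists n.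
have [Bbn bn0] : B' (b n) by rewrite B'b; exists n.
by split => //; exact: oB.
Qed.

End CompactMetricBasis.

Lemma meets_return_times_residual {R : realType} {X : metricType R} (T : X -> X)
    (x0 : X) : compact [set: X] -> continuous T -> weakly_mixing T ->
  exists2 X' : set X, dense X' /\ G_delta X' & forall x, X' x -> meets_return_times T x.
Proof.
move=> cptX contT wmT; have [b [ob bW]] := compact_opene_basis x0 cptX.
pose O (t : nat * nat * nat) :=
  \bigcup_(p in N_T T (b t.1.2) (b t.2)) iter p T @^-1` b t.1.1.
pose triple n := odflt (0, 0, 0)%N (unpickle n).
have oO t : open (O t).
  by apply: bigcup_open => p _; apply: open_preimage_iter => //; case: (ob t.1.1).
have dO t : dense (O t).
  move=> W W0 oW.
  have [A [B [oA oB AB]]] :=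
    weakly_mixing_N_TI contT wmT (conj oW W0) (ob t.1.1) (ob t.1.2) (ob t.2).
  have [p /AB[[y [Wy bpy]] bbp]] := weakly_mixing_transitive wmT oA oB.
  by exists y; split => //; exists p.
exists (\bigcap_n O (triple n)).
  split; last by exists (fun n => O (triple n)).
  by apply: (Baire_compact cptX uniform_regular) => n; [exact: oO|exact: dO].
move=> x X'x W E F oW oE oF.
have [[i bi] [j bj] [k bk]] := And3 (bW W oW) (bW E oE) (bW F oF).
have := X'x (pickle (i, j, k)) I; rewrite /triple pickleK /= => -[p bbp bpx].
by exists p; split; [exact: bi|exact: N_T_subset bbp].
Qed.

Theorem proposition5p4 (R : realType) (X : metricType R) (T : X -> X) :
  dynamical_system T ->
  (weakly_mixing T <->
   exists X' : set X, dense X' /\ G_delta X' /\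
     forall x, X' x -> forall G U V : set X, opene G -> opene U -> opene V ->
       IP_set (n_T T x G `&` N_T T U V)).
Proof.
move=> [cptX [x0 _] _ contT surjT]; split => [wmT|[X' [dX' [_ X'IP]]]].
  have [X' [dX' gX'] X'meets] := meets_return_times_residual x0 cptX contT wmT.
  exists X'; do 2!split => //; move=> x /X'meets xmeets G U V.
  exact: meets_return_times_IP_set.
apply: (dense_meets_return_times_weakly_mixing dX') => x X'x W E F oW oE oF.
exact/IP_set_neq0/X'IP.
Qed.
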